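(* Let $B\in\mathbb{C}^{n\times n}$ be nonzero of rank $r$ with Hartwig–Spindelböck decomposition $B=U\begin{bmatrix}\Sigma K&\Sigma L\\0&0\end{bmatrix}U^*$. Then $B$ is bi-dagger, i.e. $(B^2)^\dagger=(B^\dagger)^2$, if and only if $(\Sigma K\Sigma)^\dagger=\Sigma^{-1}K^*\Sigma^{-1}$.
   Context: $M^*$ is the conjugate transpose, $M^\dagger$ the Moore–Penrose inverse. Hartwig–Spindelböck decomposition: every $B\in\mathbb{C}^{n\times n}$ of rank $r>0$ can be written $B=U\begin{bmatrix}\Sigma K&\Sigma L\\0&0\end{bmatrix}U^*$ with $U$ unitary, $\Sigma\in\mathbb{C}^{r\times r}$ the positive diagonal matrix of nonzero singular values of $B$, $K\in\mathbb{C}^{r\times r}$, $L\in\mathbb{C}^{r\times(n-r)}$ with $KK^*+LL^*=I_r$. *)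

From HB Require Import structures.
From mathcomp Require Import all_boot all_order all_algebra.
From Stdlib Require Import ClassicalEpsilon.
Set Implicit Arguments. Unset Strict Implicit. Unset Printing Implicit Defensive.
Import Order.TTheory GRing.Theory Num.Theory.
Local Open Scope ring_scope.

Definition ctmx (C : numClosedFieldType) (m n : nat) (M : 'M[C]_(m, n))
  : 'M[C]_(n, m) := (map_mx Num.conj M)^T.

Definition is_mpinv (C : numClosedFieldType) (m n : nat)
  (A : 'M[C]_(m, n)) (X : 'M[C]_(n, m)) : Prop :=
  [/\ A *m X *m A = A, X *m A *m X = X,
      ctmx (A *m X) = A *m X & ctmx (X *m A) = X *m A].

(* The Moore-Penrose inverse A^dagger: the (unique, always existing)
   matrix satisfying the Penrose equations, selected by choice. *)
Definition mpinv (C : numClosedFieldType) (m n : nat) (A : 'M[C]_(m, n))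
  : 'M[C]_(n, m) := epsilon (inhabits 0) (fun X => is_mpinv A X).

Definition unitary_mx (C : numClosedFieldType) (n : nat) (U : 'M[C]_n) : Prop :=
  U *m ctmx U = 1%:M.

Definition bi_dagger (C : numClosedFieldType) (n : nat) (B : 'M[C]_n) : Prop :=
  mpinv (B *m B) = mpinv B *m mpinv B.

(** Factor the Hartwig–Spindelböck form as [B = F S G], where [S = diag s], [F = U [I; 0]] has
    orthonormal columns, and [G = [K L] U^*] has orthonormal rows, so that [G F = K].
    Conjugating by such an isometry and co-isometry commutes with taking the Moore–Penrose
    inverse, so [B^† = G^* S^-1 F^*].  In the same way [B^2 = F (S K S) G] gives
    [(B^2)^† = G^* (S K S)^† F^*] and [(B^†)^2 = G^* S^-1 K^* S^-1 F^*].  Since [X |-> G^* X F^*]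
    is injective, the two sides agree exactly when [(S K S)^† = S^-1 K^* S^-1]. *)
From HB Require Import structures.
From mathcomp Require Import all_boot all_order all_algebra.
From Stdlib Require Import ClassicalEpsilon.
Import Order.TTheory GRing.Theory Num.Theory.
Local Open Scope ring_scope.
Set Implicit Arguments. Unset Strict Implicit. Unset Printing Implicit Defensive.

Section ConjugateTranspose.
Variable C : numClosedFieldType.

Lemma ctmxK m n (A : 'M[C]_(m, n)) : ctmx (ctmx A) = A.
Proof. by apply/matrixP=> i j; rewrite !mxE conjCK. Qed.

Lemma ctmxM m n p (A : 'M[C]_(m, n)) (B : 'M[C]_(n, p)) :
  ctmx (A *m B) = ctmx B *m ctmx A.
Proof. by rewrite /ctmx map_mxM trmx_mul. Qed.

Lemma ctmx1 n : ctmx (1%:M : 'M[C]_n) = 1%:M.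
Proof. by rewrite /ctmx map_mx1 trmx1. Qed.

Lemma ctmx0 m n : ctmx (0 : 'M[C]_(m, n)) = 0.
Proof. by rewrite /ctmx map_mx0 trmx0. Qed.

Lemma ctmxV n (A : 'M[C]_n) : ctmx (invmx A) = invmx (ctmx A).
Proof. by rewrite /ctmx map_invmx trmx_inv. Qed.

Lemma ctmx_row m n1 n2 (A : 'M[C]_(m, n1)) (B : 'M[C]_(m, n2)) :
  ctmx (row_mx A B) = col_mx (ctmx A) (ctmx B).
Proof. by rewrite /ctmx map_row_mx tr_row_mx. Qed.

Lemma ctmx_col m1 m2 n (A : 'M[C]_(m1, n)) (B : 'M[C]_(m2, n)) :
  ctmx (col_mx A B) = row_mx (ctmx A) (ctmx B).
Proof. by rewrite /ctmx map_col_mx tr_col_mx. Qed.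

Lemma mxrank_ctmx m n (A : 'M[C]_(m, n)) : \rank (ctmx A) = \rank A.
Proof. by rewrite /ctmx mxrank_tr mxrank_map. Qed.

Lemma mulmx_ctmx_eq0 m n (A : 'M[C]_(m, n)) : A *m ctmx A = 0 -> A = 0.
Proof.
move=> AA0; apply/matrixP=> i j; rewrite mxE.
have := congr1 (fun M : 'M[C]_m => M i i) AA0; rewrite !mxE => /eqP.
under eq_bigr => k _ do rewrite !mxE -normCK.
rewrite psumr_eq0 => [/allP/(_ j (mem_index_enum _))|k _]; last exact: exprn_ge0.
by rewrite /= sqrf_eq0 normr_eq0 => /eqP.
Qed.

Lemma row_free_gram_unit m n (G : 'M[C]_(m, n)) :
  row_free G -> G *m ctmx G \in unitmx.
Proof.
move=> freeG; rewrite -row_free_unit -kermx_eq0; apply/eqP.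
set N := kermx _.
have NG0 : N *m G = 0.
  by apply: mulmx_ctmx_eq0; rewrite ctmxM !mulmxA -(mulmxA N) mulmx_ker mul0mx.
by move/eqP: NG0; rewrite mulmx_free_eq0 // => /eqP.
Qed.

Lemma isometry_mul m n p (A : 'M[C]_(m, n)) (B : 'M[C]_(n, p)) :
  ctmx A *m A = 1%:M -> ctmx B *m B = 1%:M ->
  ctmx (A *m B) *m (A *m B) = 1%:M.
Proof.
by move=> AA BB; rewrite ctmxM mulmxA -(mulmxA _ (ctmx A)) AA mulmx1.
Qed.

Lemma coisometry_mul m n p (A : 'M[C]_(m, n)) (B : 'M[C]_(n, p)) :
  A *m ctmx A = 1%:M -> B *m ctmx B = 1%:M ->
  (A *m B) *m ctmx (A *m B) = 1%:M.
Proof.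
by move=> AA BB; rewrite ctmxM mulmxA -(mulmxA A) BB mulmx1.
Qed.

End ConjugateTranspose.

Section MoorePenrose.
Variable C : numClosedFieldType.

Lemma is_mpinv_uniq m n (A : 'M[C]_(m, n)) X Y :
  is_mpinv A X -> is_mpinv A Y -> X = Y.
Proof.
case=> [AXA XAX hAX hXA] [AYA YAY hAY hYA].
have XE : X = X *m A *m Y.
  have -> : X = X *m ctmx (A *m X) by rewrite hAX mulmxA XAX.
  rewrite ctmxM -{1}AYA (ctmxM (A *m Y)) hAY (mulmxA (ctmx X)) -ctmxM hAX.
  by rewrite !mulmxA XAX.
have YE : Y = X *m A *m Y.
  have -> : Y = ctmx (Y *m A) *m Y by rewrite hYA YAY.
  rewrite ctmxM -{1}AXA -(mulmxA A X A) ctmxM hXA -(mulmxA _ (ctmx A)) -ctmxM.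
  by rewrite hYA -(mulmxA _ (Y *m A)) YAY.
by rewrite XE -YE.
Qed.

Lemma is_mpinv_full_rank_factor m n k (F : 'M[C]_(m, k)) (G : 'M[C]_(k, n)) :
  G *m ctmx G \in unitmx -> ctmx F *m F \in unitmx ->
  is_mpinv (F *m G)
    (ctmx G *m invmx (G *m ctmx G) *m invmx (ctmx F *m F) *m ctmx F).
Proof.
move=> uG uF.
set P := invmx (G *m ctmx G); set Q := invmx (ctmx F *m F).
have hP : ctmx P = P by rewrite ctmxV ctmxM ctmxK.
have hQ : ctmx Q = Q by rewrite ctmxV ctmxM ctmxK.
have GGP : G *m ctmx G *m P = 1%:M by rewrite mulmxV.
have QFF : Q *m ctmx F *m F = 1%:M by rewrite -mulmxA mulVmx.
have AXE : F *m G *m (ctmx G *m P *m Q *m ctmx F) = F *m Q *m ctmx F.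
  by rewrite !mulmxA -(mulmxA F G) -(mulmxA F (G *m _)) GGP mulmx1.
have XAE : ctmx G *m P *m Q *m ctmx F *m (F *m G) = ctmx G *m P *m G.
  by rewrite !mulmxA -(mulmxA _ Q (ctmx F)) -(mulmxA _ (Q *m _) F) QFF mulmx1.
split.
- by rewrite AXE !mulmxA -(mulmxA _ Q (ctmx F)) -(mulmxA _ (Q *m _) F) QFF mulmx1.
- by rewrite XAE !mulmxA -(mulmxA _ G (ctmx G)) -(mulmxA _ (G *m _) P) GGP mulmx1.
- by rewrite AXE !ctmxM ctmxK hQ mulmxA.
- by rewrite XAE !ctmxM ctmxK hP mulmxA.
Qed.

Lemma mpinv_exists m n (A : 'M[C]_(m, n)) : exists X, is_mpinv A X.
Proof.
rewrite -(mulmx_base A); eexists; apply: is_mpinv_full_rank_factor.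
  exact/row_free_gram_unit/row_base_free.
rewrite -{2}(ctmxK (col_base A)); apply: row_free_gram_unit.
by rewrite /row_free mxrank_ctmx; apply: col_base_full.
Qed.

Lemma mpinvP m n (A : 'M[C]_(m, n)) : is_mpinv A (mpinv A).
Proof. by apply: epsilon_spec; apply: mpinv_exists. Qed.

Lemma mpinvE m n (A : 'M[C]_(m, n)) X : is_mpinv A X -> mpinv A = X.
Proof. exact/is_mpinv_uniq/mpinvP. Qed.

Lemma is_mpinv_invmx n (S : 'M[C]_n) : S \in unitmx -> is_mpinv S (invmx S).
Proof.
by move=> uS; split; rewrite ?mulmxV ?mulVmx ?mul1mx ?ctmx1.
Qed.

Lemma is_mpinv_isometry_conj n k (F : 'M[C]_(n, k)) (G : 'M[C]_(k, n)) T X :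
  ctmx F *m F = 1%:M -> G *m ctmx G = 1%:M -> is_mpinv T X ->
  is_mpinv (F *m T *m G) (ctmx G *m X *m ctmx F).
Proof.
move=> FF GG [TXT XTX hTX hXT].
have AXE : F *m T *m G *m (ctmx G *m X *m ctmx F) = F *m (T *m X) *m ctmx F.
  by rewrite !mulmxA -(mulmxA _ G) GG mulmx1.
have XAE : ctmx G *m X *m ctmx F *m (F *m T *m G) = ctmx G *m (X *m T) *m G.
  by rewrite !mulmxA -(mulmxA _ (ctmx F)) FF mulmx1.
split.
- by rewrite AXE !mulmxA -(mulmxA _ (ctmx F)) FF mulmx1 -(mulmxA F T X) -(mulmxA F) TXT.
- by rewrite XAE !mulmxA -(mulmxA _ G) GG mulmx1 -(mulmxA (ctmx G) X T) -(mulmxA (ctmx G)) XTX.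
- by rewrite AXE ctmxM ctmxK ctmxM hTX mulmxA.
- by rewrite XAE ctmxM ctmxM ctmxK hXT mulmxA.
Qed.

Lemma mpinv_isometry_conj n k (F : 'M[C]_(n, k)) (G : 'M[C]_(k, n)) T :
  ctmx F *m F = 1%:M -> G *m ctmx G = 1%:M ->
  mpinv (F *m T *m G) = ctmx G *m mpinv T *m ctmx F.
Proof. by move=> FF GG; apply/mpinvE/is_mpinv_isometry_conj/mpinvP. Qed.

Lemma isometry_conj_inj n k (F : 'M[C]_(n, k)) (G : 'M[C]_(k, n)) (X Y : 'M[C]_k) :
  ctmx F *m F = 1%:M -> G *m ctmx G = 1%:M ->
  ctmx G *m X *m ctmx F = ctmx G *m Y *m ctmx F -> X = Y.
Proof.
move=> FF GG /(congr1 (fun M => G *m M *m F)) /=.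
by rewrite !mulmxA GG !mul1mx -!mulmxA FF !mulmx1.
Qed.

Lemma bi_dagger_isometry_factor n k (F : 'M[C]_(n, k)) (G : 'M[C]_(k, n)) S :
  ctmx F *m F = 1%:M -> G *m ctmx G = 1%:M -> S \in unitmx ->
  bi_dagger (F *m S *m G) <->
  mpinv (S *m (G *m F) *m S) = invmx S *m ctmx (G *m F) *m invmx S.
Proof.
move=> FF GG uS.
have Bdag : mpinv (F *m S *m G) = ctmx G *m invmx S *m ctmx F.
  exact/mpinvE/is_mpinv_isometry_conj/is_mpinv_invmx.
have B2 : F *m S *m G *m (F *m S *m G) = F *m (S *m (G *m F) *m S) *m G.
  by rewrite !mulmxA.
have Bdag2 : ctmx G *m invmx S *m ctmx F *m (ctmx G *m invmx S *m ctmx F)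
    = ctmx G *m (invmx S *m ctmx (G *m F) *m invmx S) *m ctmx F.
  by rewrite ctmxM !mulmxA.
rewrite /bi_dagger Bdag B2 Bdag2 mpinv_isometry_conj //.
by split=> [/(isometry_conj_inj FF GG) | ->].
Qed.

End MoorePenrose.

Lemma diag_mx_unit (C : fieldType) n (s : 'rV[C]_n) :
  (forall i, s 0 i != 0) -> diag_mx s \in unitmx.
Proof. by move=> s_neq0; rewrite unitmxE det_diag unitfE; apply/prodf_neq0. Qed.

Theorem corollary5p4 (C : numClosedFieldType) (r m : nat)
  (B : 'M[C]_(r + m)) (U : 'M[C]_(r + m)) (s : 'rV[C]_r)
  (K : 'M[C]_r) (L : 'M[C]_(r, m)) :
  (0 < r)%N ->
  B != 0 ->
  \rank B = r ->
  unitary_mx U ->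
  (forall i, 0 < s 0 i) ->
  K *m ctmx K + L *m ctmx L = 1%:M ->
  B = U *m block_mx (diag_mx s *m K) (diag_mx s *m L) 0 0 *m ctmx U ->
  bi_dagger B <->
  mpinv (diag_mx s *m K *m diag_mx s)
    = invmx (diag_mx s) *m ctmx K *m invmx (diag_mx s).
Proof.
move=> _ _ _ U_unitary s_gt0 KKLL ->.
set E : 'M[C]_(r + m, r) := col_mx 1%:M 0.
set W : 'M[C]_(r, r + m) := row_mx K L.
have EE : ctmx E *m E = 1%:M.
  by rewrite ctmx_col ctmx1 ctmx0 mul_row_col mul0mx addr0 mulmx1.
have WW : W *m ctmx W = 1%:M by rewrite ctmx_row mul_row_col.
have U_iso : ctmx U *m U = 1%:M := mulmx1C U_unitary.
have Uh_coiso : ctmx U *m ctmx (ctmx U) = 1%:M by rewrite ctmxK.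
have WUUE : W *m ctmx U *m (U *m E) = K.
  by rewrite mulmxA -(mulmxA W) U_iso mulmx1 mul_row_col mulmx1 mulmx0 addr0.
have -> : block_mx (diag_mx s *m K) (diag_mx s *m L) 0 0 = E *m diag_mx s *m W.
  by rewrite -mulmxA mul_col_mx mul1mx mul0mx mul_mx_row block_mxEv row_mx0.
have -> : U *m (E *m diag_mx s *m W) *m ctmx U
    = U *m E *m diag_mx s *m (W *m ctmx U) by rewrite !mulmxA.
rewrite bi_dagger_isometry_factor ?WUUE //.
- exact: isometry_mul U_iso EE.
- exact: coisometry_mul WW Uh_coiso.
- by apply: diag_mx_unit => i; rewrite gt_eqF.
Qed.
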